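(* Let $\mathcal S$ be a trajectory set satisfying (nL), i.e. $\bar\sigma(0)\ge0$ holds in the shifted conditional space $\mathcal S^{(S,j)}$ for every $S\in\mathcal S$ and $j\in\mathbb N_0$. Then $\mathcal S$ satisfies (nK), i.e. for every $S\in\mathcal S$ and $j\in\mathbb N_0$ the shifted conditional space $\mathcal S^{(S,j)}$ satisfies (LOP) and (K).
   Context: Fix $s_0\in\mathbb R$. A trajectory set (with initial value $s_0$) is any set $\mathcal S$ of real sequences $S=(S_j)_{j\in\mathbb N_0}$ with $S_0=s_0$. All of the following notions are defined for an arbitrary trajectory set $\mathcal T$ (in place of $\mathcal S$). A simple portfolio $(V,n,H)$ consists of $V\in\mathbb R$, $n\in\mathbb N$ and nonanticipating functions $H_i:\mathcal T\to\mathbb R$, $0\le i\le n-1$ (i.e. $H_i(S)=h_i(S_0,\dots,S_i)$ for some arbitrary $h_i:\mathbb R^{i+1}\to\mathbb R$). Its wealth is $\Pi^{V,n,H}_j(S)=V+\sum_{i=0}^{\min\{j,n\}-1}H_i(S)(S_{i+1}-S_i)$ and $\Pi^{V,n,H}_\infty:=\Pi^{V,n,H}_n$; it is positive if $V\ge0$ and $\Pi^{V,n,H}_\infty\ge0$ on $\mathcal T$. A generalized portfolio is a sequence $(V_m,n_m,H_m)_{m\in\mathbb N_0}$ of simple portfolios, positive for every $m\ge1$; it is a positive generalized portfolio if moreover $\Pi^{V_0,n_0,H_0}_j\equiv0$ for all $j$. A map $f:\mathcal T\to[-\infty,+\infty]$ is superhedged with initial endowment $V=\sum_{m=0}^\infty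 V_m\in(-\infty,+\infty]$ by such a portfolio if $f\le\sum_{m=0}^\infty\Pi^{V_m,n_m,H_m}_\infty$ on $\mathcal T$. For $f\ge0$, $\bar I(f)$ is the infimum of initial endowments of positive generalized portfolios superhedging $f$; $\bar\sigma(f)$ is the infimum of initial endowments of generalized portfolios superhedging $f$. Let $\mathcal E=\{\Pi^{V,n,H}_\infty\}$ over all simple portfolios. (LOP): whenever two simple portfolios have equal terminal wealth $\Pi_\infty$ on all of $\mathcal T$, their initial endowments coincide; under (LOP), $I(\Pi^{V,n,H}_\infty):=V$ is well defined on $\mathcal E$. (K): $I(f)+\bar I(f^-)\le\bar I(f^+)$ for every $f\in\mathcal E$. For $S\in\mathcal S$, $j\in\mathbb N_0$, the conditional space is $\mathcal S_{(S,j)}=\{\tilde S\in\mathcal S:(\tilde S_0,\dots,\tilde S_j)=(S_0,\dots,S_j)\}$ and the shifted conditional space is $\mathcal S^{(S,j)}=\{(\tilde S_{j+i})_{i\in\mathbb N_0}:\tilde S\in\mathcal S_{(S,j)}\}$, a trajectory set with initial value $S_j$. *)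

From mathcomp Require Import all_boot all_order all_algebra.
From mathcomp Require Import all_classical all_reals all_analysis.
Set Implicit Arguments. Unset Strict Implicit. Unset Printing Implicit Defensive.
Import Order.TTheory GRing.Theory Num.Theory.
Local Open Scope classical_set_scope.
Local Open Scope ring_scope.

Section Trading.
Variable R : realType.

Definition rseq := nat -> R.

Definition prefix (S : rseq) (i : nat) : seq R := [seq S k | k <- iota 0 i.+1].

(* H_i(S) = h_i(S_0,...,S_i) with h_i an
   arbitrary function of the first i+1 values, so H is nonanticipating by
   construction.  n must be in N = {1,2,...} (see is_simple). *)
Record portfolio := Portfolio {
  pV : R;
  pn : nat;
  ph : nat -> seq R -> R }.

Definition is_simple (p : portfolio) : Prop := (0 < pn p)%N.

Definition H (p : portfolio) (i : nat) (S : rseq) : R := ph p i (prefix S i).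

Definition wealth (p : portfolio) (j : nat) (S : rseq) : R :=
  pV p + \sum_(0 <= i < minn j (pn p)) H p i S * (S i.+1 - S i).

Definition twealth (p : portfolio) (S : rseq) : R := wealth p (pn p) S.

Definition positive_pf (T : set rseq) (p : portfolio) : Prop :=
  0 <= pV p /\ forall S, T S -> 0 <= twealth p S.

Definition gen_portfolio (T : set rseq) (P : nat -> portfolio) : Prop :=
  (forall m, is_simple (P m)) /\ (forall m, (0 < m)%N -> positive_pf T (P m)).

Definition pos_gen_portfolio (T : set rseq) (P : nat -> portfolio) : Prop :=
  gen_portfolio T P /\ forall j S, T S -> wealth (P 0%N) j S = 0.

Definition endowment (P : nat -> portfolio) : \bar R :=
  (\sum_(0 <= m <oo) (pV (P m))%:E)%E.

Definition superhedges (T : set rseq) (P : nat -> portfolio)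
    (f : rseq -> \bar R) : Prop :=
  forall S, T S -> (f S <= \sum_(0 <= m <oo) (twealth (P m) S)%:E)%E.

Definition Ibar (T : set rseq) (f : rseq -> \bar R) : \bar R :=
  ereal_inf [set endowment P | P in
             [set P | pos_gen_portfolio T P /\ superhedges T P f]].

Definition sigmabar (T : set rseq) (f : rseq -> \bar R) : \bar R :=
  ereal_inf [set endowment P | P in
             [set P | gen_portfolio T P /\ superhedges T P f]].

Definition LOP (T : set rseq) : Prop :=
  forall p1 p2, is_simple p1 -> is_simple p2 ->
    (forall S, T S -> twealth p1 S = twealth p2 S) -> pV p1 = pV p2.

(* (K): for f = Pi^{V,n,H}_infty in E, I(f) = V. *)
Definition condK (T : set rseq) : Prop :=
  forall p, is_simple p ->
    ((pV p)%:E + Ibar T (fun S => (Num.max (- twealth p S) 0)%:E)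
       <= Ibar T (fun S => (Num.max (twealth p S) 0)%:E))%E.

Definition shifted_cond (T : set rseq) (S : rseq) (j : nat) : set rseq :=
  [set (fun i => S' (j + i)%N) | S' in
     [set S' | T S' /\ forall k, (k <= j)%N -> S' k = S k]].

Definition condnL (T : set rseq) : Prop :=
  forall S j, T S -> (0 <= sigmabar (shifted_cond T S j) (fun _ => 0%E))%E.

Definition condnK (T : set rseq) : Prop :=
  forall S j, T S -> LOP (shifted_cond T S j) /\ condK (shifted_cond T S j).

End Trading.

(* (nL) passes to shifted conditional spaces, so it suffices to show that a
   nonempty trajectory set U with (nL) satisfies (LOP) and (K).  Shifting a
   generalized portfolio to the conditional space at a node (S, i) turns (nL)
   into local no-arbitrage: if a simple portfolio plus countably many
   conditionally positive ones superhedge 0 from the node on, their total wealth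
   at the node is nonnegative.  (LOP) is the case of two simple portfolios at
   time 0.
   For (K), let Q be a positive generalized portfolio superhedging f^+ with
   finite endowment e, where f is the terminal wealth of (V, n, H).  Local
   no-arbitrage makes every Q_m nonnegative at every node and the total wealth
   of Q dominate that of (V, n, H).  While the aggregate holdings sum_m H^m_i
   are absolutely summable, the simple portfolio with endowment e - V and
   holdings sum_m H^m_i - H_i tracks sum_m Pi^m - Pi, hence superhedges f^-.
   If the aggregate diverges at a node where the price then moves, the price
   cannot move both ways from that node (otherwise the positivity of each Q_m
   in both directions bounds |H^m_i| by a constant times Pi^m_i), so betting
   k units in the forced direction, k = 1, 2, ..., gains without bound there.
   These portfolios form a positive generalized portfolio with endowment e - V
   superhedging f^-, whence V + Ibar(f^-) <= Ibar(f^+). *)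

From Pilot Require Import Defs.
From mathcomp Require Import all_boot all_order all_algebra.
From mathcomp Require Import all_classical all_reals all_analysis.
From mathcomp.algebra_tactics Require Import ring lra.
From mathcomp Require Import zify.
(* Re-imported so that [prefix] is the price prefix of Defs, not seq's. *)
Import Defs.
Set Implicit Arguments. Unset Strict Implicit. Unset Printing Implicit Defensive.
Import Order.TTheory GRing.Theory Num.Theory.
Import numFieldNormedType.Exports.
Local Open Scope classical_set_scope.
Local Open Scope ring_scope.

Section Wealth.
Variable R : realType.
Implicit Types (p : portfolio R) (S : rseq R).

Definition hold p i S : R := if (i < pn p)%N then H p i S else 0.

Lemma wealth0 p S : wealth p 0 S = pV p.
Proof. by rewrite /wealth min0n big_geq // addr0. Qed.

Lemma wealthS p i S :
  wealth p i.+1 S = wealth p i S + hold p i S * (S i.+1 - S i).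
Proof.
rewrite /wealth /hold; case: (ltnP i (pn p)) => hi.
  by rewrite (minn_idPl hi) big_nat_recr //= addrA.
by rewrite (minn_idPr (leqW hi)) mul0r addr0.
Qed.

Lemma wealth_horizon p j S : (pn p <= j)%N -> wealth p j S = twealth p S.
Proof. by move=> h; rewrite /twealth /wealth (minn_idPr h) minnn. Qed.

Definition const_portfolio (c : R) : portfolio R := Portfolio c 1 (fun _ _ => 0).

Lemma wealth_const c j S : wealth (const_portfolio c) j S = c.
Proof.
elim: j => [|j IH]; rewrite ?wealth0 // wealthS IH.
by rewrite /hold /H /=; case: ifP; rewrite mul0r addr0.
Qed.

Lemma twealth_const c S : twealth (const_portfolio c) S = c.
Proof. exact: wealth_const. Qed.

Definition sub_portfolio p2 p1 : portfolio R :=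
  Portfolio (pV p2 - pV p1) (maxn (pn p1) (pn p2))
    (fun i x => (if (i < pn p2)%N then ph p2 i x else 0)
              - (if (i < pn p1)%N then ph p1 i x else 0)).

Lemma wealth_sub p2 p1 j S :
  wealth (sub_portfolio p2 p1) j S = wealth p2 j S - wealth p1 j S.
Proof.
elim: j => [|j IH]; first by rewrite !wealth0.
rewrite !wealthS IH.
have -> : hold (sub_portfolio p2 p1) j S = hold p2 j S - hold p1 j S.
  rewrite /hold /H /=; case: ifP => hj //.
  move/negbT: hj; rewrite -leqNgt geq_max => /andP[h1 h2].
  by rewrite !ifF ?subr0 // ltnNge ?h1 ?h2.
ring.
Qed.

Lemma twealth_sub p2 p1 S :
  twealth (sub_portfolio p2 p1) S = twealth p2 S - twealth p1 S.
Proof.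
rewrite /twealth wealth_sub /=.
by rewrite -!/(twealth _ _) !wealth_horizon // ?leq_maxl ?leq_maxr.
Qed.

Definition agree S S' i := forall k, (k <= i)%N -> S' k = S k.

Lemma agree_le S S' i l : agree S S' i -> (l <= i)%N -> agree S S' l.
Proof. by move=> ag hl k hk; apply: ag; apply: leq_trans hl. Qed.

Lemma agree_sym S S' i : agree S S' i -> agree S' S i.
Proof. by move=> ag k hk; rewrite ag. Qed.

Lemma agree_trans S S' S'' i : agree S S' i -> agree S' S'' i -> agree S S'' i.
Proof. by move=> a1 a2 k hk; rewrite a2 // a1. Qed.

Definition nonanticipating (F : nat -> rseq R -> R) : Prop :=
  forall i S S', agree S S' i -> F i S' = F i S.

Lemma prefix_agree S S' i : agree S S' i -> prefix S' i = prefix S i.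
Proof.
by move=> ag; apply/eq_in_map => k; rewrite mem_iota add0n => /andP[_ /ag].
Qed.

Lemma H_agree p S S' i : agree S S' i -> H p i S' = H p i S.
Proof. by move=> ag; rewrite /H (prefix_agree ag). Qed.

Lemma hold_agree p S S' i : agree S S' i -> hold p i S' = hold p i S.
Proof. by move=> ag; rewrite /hold (H_agree _ ag). Qed.

Lemma wealth_agree p S S' i j :
  agree S S' i -> (j <= i)%N -> wealth p j S' = wealth p j S.
Proof.
move=> ag; elim: j => [|j IH] hj; first by rewrite !wealth0.
have agj := agree_le ag (ltnW hj).
by rewrite !wealthS IH ?(ltnW hj) // (hold_agree _ agj) (ag j.+1) // agj.
Qed.

Definition path_of (x : seq R) : rseq R := nth 0 x.

Lemma agree_path_of_prefix S i : agree S (path_of (prefix S i)) i.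
Proof.
move=> k hk; rewrite /path_of /prefix (nth_map 0%N) ?size_iota //.
by rewrite nth_iota.
Qed.

Definition portfolio_of (V : R) (n : nat) (F : nat -> rseq R -> R) : portfolio R :=
  Portfolio V n (fun i x => F i (path_of x)).

Lemma H_portfolio_of V n F i S :
  nonanticipating F -> H (portfolio_of V n F) i S = F i S.
Proof. by move=> hF; rewrite /H /= (hF _ _ _ (@agree_path_of_prefix S i)). Qed.

End Wealth.

Section Shift.
Variable R : realType.
Implicit Types (p : portfolio R) (S : rseq R) (T : set (rseq R)).

Definition shift_seq S i : rseq R := fun k => S (i + k)%N.

Lemma prefix_shift S S' i l : agree S S' i ->
  prefix S' (i + l) = [seq S k | k <- iota 0 i] ++ prefix (shift_seq S' i) l.
Proof.
move=> ag; rewrite /prefix -addnS iotaD map_cat; congr (_ ++ _).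
  apply/eq_in_map => k; rewrite mem_iota add0n => /andP[_ hk].
  by apply: ag; apply: ltnW.
by rewrite add0n -[in LHS](addn0 i) iotaDl -map_comp.
Qed.

(* The prices up to time i are frozen to those of S, and the endowment is the
   wealth reached at time i. *)
Definition shift_portfolio S i p : portfolio R :=
  Portfolio (wealth p i S) (pn p - i).+1
    (fun l x => if (i + l < pn p)%N
                then ph p (i + l) ([seq S k | k <- iota 0 i] ++ x) else 0).

Lemma wealth_shift_portfolio S S' i p l : agree S S' i ->
  wealth (shift_portfolio S i p) l (shift_seq S' i) = wealth p (i + l) S'.
Proof.
move=> ag; elim: l => [|l IH].
  by rewrite wealth0 addn0 /= (wealth_agree p ag (leqnn i)).
rewrite wealthS IH addnS wealthS; congr (_ + _ * _).
  rewrite /hold /H /=; case: (ltnP l (pn p - i).+1) => h0;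
    case: (ltnP (i + l) (pn p)) => h1 //.
    by rewrite -prefix_shift.
  lia.
by rewrite /shift_seq addnS.
Qed.

Lemma twealth_shift_portfolio S S' i p : agree S S' i ->
  twealth (shift_portfolio S i p) (shift_seq S' i) = twealth p S'.
Proof.
move=> ag; rewrite {1}/twealth wealth_shift_portfolio //.
by apply: wealth_horizon => /=; lia.
Qed.

Lemma shifted_cond_shift T S0 j0 S i :
  T S -> agree S0 S j0 ->
  shifted_cond (shifted_cond T S0 j0) (shift_seq S j0) i = shifted_cond T S (j0 + i).
Proof.
move=> TS agS; apply/seteqP; split => x.
  case=> S' [[S'' [TS'' ag''] eS'] agS'] <-.
  exists S''.
    split => // k hk; case: (leqP k j0) => hk0.
      by rewrite ag'' // agS.
    have -> : k = (j0 + (k - j0))%N by lia.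
    have -> : S'' (j0 + (k - j0))%N = S' (k - j0)%N by rewrite -eS'.
    by rewrite agS' //; lia.
  by apply/funext => k; rewrite -eS' /shift_seq addnA.
case=> S'' [TS'' ag] <-.
exists (shift_seq S'' j0).
  split.
    exists S'' => //; split => // k hk.
    by rewrite ag ?agS //; lia.
  by move=> k hk; rewrite /shift_seq ag //; lia.
by apply/funext => k; rewrite /shift_seq addnA.
Qed.

Lemma condnL_shifted_cond T S0 j0 : condnL T -> condnL (shifted_cond T S0 j0).
Proof.
move=> nL S i [S' [TS' agS'] <-].
by rewrite shifted_cond_shift //; exact: nL.
Qed.

End Shift.

Section ExtendedSeries.
Variable R : realType.

Lemma eseries_recl_fin (u : nat -> \bar R) (a : R) : u 0%N = a%:E ->
  (forall m, (0 <= u m.+1)%E) ->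
  (\sum_(0 <= m <oo) u m = a%:E + \sum_(0 <= m <oo) u m.+1)%E.
Proof.
move=> u0 upos.
have cv : cvgn (fun n => (\sum_(0 <= m < n) u m.+1)%E).
  by apply: is_cvg_ereal_nneg_natsum => n _; apply: upos.
apply/cvg_lim => //; rewrite -cvg_shiftS /=.
have -> : (fun n => \sum_(0 <= m < n.+1) u m)%E =
          (fun _ => a%:E) \+ (fun n => \sum_(0 <= m < n) u m.+1)%E.
  by apply/funext => n /=; rewrite big_nat_recl // u0.
apply: cvgeD; [exact: fin_num_adde_defr | exact: cvg_cst | exact: cv].
Qed.

Lemma eseries_EFin_lim (u : nat -> R) : cvgn (series u) ->
  (\sum_(0 <= m <oo) (u m)%:E)%E = (limn (series u))%:E.
Proof.
move=> cu; rewrite -EFin_lim //; congr (limn _); apply/funext => n /=.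
by rewrite sumEFin.
Qed.

Lemma nneseries_ge_term (u : nat -> \bar R) k : (forall m, (0 <= u m)%E) ->
  (u k <= \sum_(0 <= m <oo) u m)%E.
Proof.
move=> u0; rewrite (@nneseriesD1 _ _ k) // leeDl //.
by apply: nneseries_ge0 => m _ _; exact: u0.
Qed.

Lemma eseries_addMr (a b : nat -> R) c A : (forall m, 0 <= a m) ->
  (\sum_(0 <= m <oo) (a m)%:E = A%:E)%E ->
  (\sum_(0 <= m <oo) (`|b m|)%:E < +oo)%E ->
  (\sum_(0 <= m <oo) (a m + b m * c)%:E = (A + limn (series b) * c)%:E)%E.
Proof.
move=> a0 hA hb.
have ca : cvgn (series a) by apply: nnseries_is_cvg => //; rewrite hA ltry.
have eA : A = limn (series a) by move: hA; rewrite eseries_EFin_lim // => -[].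
have cb : cvgn (series b).
  by apply: normed_cvg; apply: (@nnseries_is_cvg _ (fun n => `|b n|)).
have e : series (fun m => a m + b m * c) = (fun n => series a n + series b n * c).
  by apply/funext => n; rewrite /series /= big_split /= mulr_suml.
have cc : series (fun m => a m + b m * c) @ \oo -->
          limn (series a) + limn (series b) * c.
  by rewrite e; apply: cvgD; [exact: ca | apply: cvgMr_tmp; exact: cb].
rewrite eseries_EFin_lim; last by apply/cvg_ex; eexists; exact: cc.
by rewrite (cvg_lim _ cc) // eA.
Qed.

Lemma lee_EFin_ge0_addN (x : R) (y : \bar R) : (x%:E <= y)%E = (0 <= (- x)%:E + y)%E.
Proof. by rewrite addeC EFinN sube_ge0. Qed.

End ExtendedSeries.

Lemma normr_le_of_nonneg_moves (R : realFieldType) (w h a b : R) :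
  0 <= w -> a < 0 -> 0 < b -> 0 <= w + h * a -> 0 <= w + h * b ->
  `|h| <= (b - a) / (b * - a) * w.
Proof.
move=> w0 a0 b0 ha hb.
have K0 : 0 < b * - a by apply: mulr_gt0; rewrite // oppr_gt0.
rewrite mulrAC ler_pdivlMr //.
by case: (lerP 0 h) => hh; [rewrite ger0_norm // | rewrite ltr0_norm //]; nra.
Qed.

Section LocalNoArbitrage.
Variable R : realType.
Variable U : set (rseq R).
Hypothesis nL : condnL U.
Implicit Types (p : portfolio R) (S : rseq R).

(* Shift the portfolios to the conditional space at (S, i), where (nL) applies. *)
Lemma condnL_wealth_ge0 S i A (P : nat -> portfolio R) : U S ->
  (forall m, 0 <= wealth (P m) i S) ->
  (forall S', U S' -> agree S S' i -> forall m, 0 <= twealth (P m) S') ->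
  (forall S', U S' -> agree S S' i ->
     (0 <= (twealth A S')%:E + \sum_(0 <= m <oo) (twealth (P m) S')%:E)%E) ->
  (0 <= (wealth A i S)%:E + \sum_(0 <= m <oo) (wealth (P m) i S)%:E)%E.
Proof.
move=> US Pi Pt hA.
pose P' m := shift_portfolio S i (if m is m'.+1 then P m' else A).
have -> : ((wealth A i S)%:E + \sum_(0 <= m <oo) (wealth (P m) i S)%:E)%E
          = endowment P'.
  by rewrite /endowment [RHS](@eseries_recl_fin _ _ (wealth A i S)).
apply: le_trans (nL i US) _.
apply: ereal_inf_lbound; exists P' => //; split.
  split=> [[|m] //|[|m] // _]; split; first exact: Pi.
  by move=> _ [S' [US' ag] <-]; rewrite twealth_shift_portfolio //; apply: Pt.
move=> _ [S' [US' ag] <-].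
rewrite (@eseries_recl_fin _ _ (twealth A S')); first last.
- by move=> m; rewrite lee_fin twealth_shift_portfolio //; apply: Pt.
- by rewrite /P' twealth_shift_portfolio.
under eq_eseriesr do rewrite /P' twealth_shift_portfolio //.
exact: hA.
Qed.

Lemma condnL_wealth1_ge0 S i A : U S ->
  (forall S', U S' -> agree S S' i -> 0 <= twealth A S') -> 0 <= wealth A i S.
Proof.
move=> US hA.
have zero j S' : (\sum_(0 <= m <oo) (wealth (const_portfolio 0) j S')%:E)%E = 0%E.
  by apply: eseries0 => m _ _; rewrite wealth_const.
have := @condnL_wealth_ge0 S i A (fun _ => const_portfolio 0) US.
rewrite zero adde0 lee_fin; apply.
- by move=> m; rewrite wealth_const.
- by move=> S' _ _ m; rewrite twealth_const.
by move=> S' US' ag; rewrite /twealth zero adde0 lee_fin; apply: hA.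
Qed.

Lemma condnL_LOP : (exists S, U S) -> LOP U.
Proof.
move=> [S US] p1 p2 _ _ heq.
have h1 : 0 <= wealth (sub_portfolio p2 p1) 0 S.
  by apply: condnL_wealth1_ge0 => // S' US' _; rewrite twealth_sub heq // subrr.
have h2 : 0 <= wealth (sub_portfolio p1 p2) 0 S.
  by apply: condnL_wealth1_ge0 => // S' US' _; rewrite twealth_sub heq // subrr.
by rewrite !wealth0 /= in h1 h2; lra.
Qed.

End LocalNoArbitrage.

Section CondK.
Variable R : realType.
Variables (U : set (rseq R)) (p : portfolio R) (Q : nat -> portfolio R) (e : R).
Hypothesis nL : condnL U.
Hypothesis p_simple : is_simple p.
Hypothesis Q_pos : pos_gen_portfolio U Q.
Hypothesis Q_superhedges : superhedges U Q (fun S => (Num.max (twealth p S) 0)%:E).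
Hypothesis Q_endowment : endowment Q = e%:E.
Implicit Types (S : rseq R).

Definition total_wealth i S : \bar R := (\sum_(0 <= m <oo) (wealth (Q m) i S)%:E)%E.

Definition summable_at i S : Prop :=
  (\sum_(0 <= m <oo) (`|hold (Q m) i S|)%:E < +oo)%E.

Definition blown_up i S : Prop :=
  exists l, (l < i)%N /\ ~ summable_at l S /\ S l.+1 <> S l.

Definition residual_hold i S : R :=
  if `[< ~ blown_up i S /\ summable_at i S >]
  then limn (series (fun m => hold (Q m) i S)) - hold p i S else 0.

Definition residual : portfolio R := portfolio_of (e - pV p) (pn p) residual_hold.

Definition forced_sign i S : R :=
  if `[< forall S', U S' -> agree S S' i -> S' i <= S' i.+1 >] then 1
  else if `[< forall S', U S' -> agree S S' i -> S' i.+1 <= S' i >] then -1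
  else 0.

Definition bet (k : nat) : portfolio R :=
  portfolio_of 0 (pn p) (fun i S => k%:R * forced_sign i S).

Definition minus_hedge (m : nat) : portfolio R :=
  match m with 0%N => const_portfolio 0 | 1%N => residual | k.+2 => bet k end.

Lemma summable_at_agree S S' i : agree S S' i -> summable_at i S' = summable_at i S.
Proof. by move=> ag; rewrite /summable_at; under eq_eseriesr do rewrite (hold_agree _ ag). Qed.

Lemma blown_up_agree S S' i : agree S S' i -> blown_up i S' = blown_up i S.
Proof.
move=> ag; apply: propext; split => -[l [hl [hg hd]]]; exists l;
  have agl := agree_le ag (ltnW hl).
  by rewrite -(summable_at_agree agl) -!ag // ltnW.
by rewrite (summable_at_agree agl) !ag // ltnW.
Qed.

Lemma residual_hold_nonanticipating : nonanticipating residual_hold.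
Proof.
move=> i S S' ag; rewrite /residual_hold (blown_up_agree ag) (summable_at_agree ag).
rewrite (hold_agree _ ag); congr (if _ then _ - _ else _); congr (limn _).
by apply/funext => n; apply: eq_bigr => m _; rewrite (hold_agree _ ag).
Qed.

Lemma forced_sign_nonanticipating : nonanticipating forced_sign.
Proof.
move=> i S S' ag; rewrite /forced_sign.
have E (P : rseq R -> Prop) : (forall S'', U S'' -> agree S' S'' i -> P S'') =
                              (forall S'', U S'' -> agree S S'' i -> P S'').
  apply: propext; split => h S'' US'' ag''; apply: h => //.
    exact: agree_trans (agree_sym ag) ag''.
  exact: agree_trans ag ag''.
by rewrite !E.
Qed.

Lemma twealth_Q_ge0 m S : U S -> 0 <= twealth (Q m) S.
Proof.
move=> US; case: m => [|m]; first by rewrite /twealth Q_pos.2.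
by have [_] := Q_pos.1.2 m.+1 isT; apply.
Qed.

Lemma wealth_Q_ge0 m i S : U S -> 0 <= wealth (Q m) i S.
Proof. by move=> US; apply: (condnL_wealth1_ge0 nL) => // S' US' _; apply: twealth_Q_ge0. Qed.

Lemma total_wealth_ge i S : U S -> ((wealth p i S)%:E <= total_wealth i S)%E.
Proof.
move=> US.
have := @condnL_wealth_ge0 _ U nL S i (sub_portfolio (const_portfolio 0) p) Q US.
rewrite wealth_sub wealth_const sub0r -lee_EFin_ge0_addN; apply.
- by move=> m; apply: wealth_Q_ge0.
- by move=> S' US' _ m; apply: twealth_Q_ge0.
move=> S' US' _; rewrite twealth_sub twealth_const sub0r -lee_EFin_ge0_addN.
by apply: le_trans (Q_superhedges US'); rewrite lee_fin le_max lexx.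
Qed.

Lemma total_wealth_horizon S : U S ->
  ((Num.max (twealth p S) 0)%:E <= total_wealth (pn p) S)%E.
Proof.
move=> US; set x := Num.max (twealth p S) 0.
have := @condnL_wealth_ge0 _ U nL S (pn p) (const_portfolio (- x)) Q US.
rewrite wealth_const -lee_EFin_ge0_addN; apply.
- by move=> m; apply: wealth_Q_ge0.
- by move=> S' US' _ m; apply: twealth_Q_ge0.
move=> S' US' ag; rewrite twealth_const -lee_EFin_ge0_addN.
by rewrite /x /twealth -(wealth_agree _ ag (leqnn _)); exact: Q_superhedges.
Qed.

Lemma total_wealth0 S : total_wealth 0 S = e%:E.
Proof. by rewrite -Q_endowment; apply: eq_eseriesr => m _; rewrite wealth0. Qed.

Lemma total_wealthS i S : total_wealth i.+1 S =
  (\sum_(0 <= m <oo) (wealth (Q m) i S + hold (Q m) i S * (S i.+1 - S i))%:E)%E.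
Proof. by apply: eq_eseriesr => m _; rewrite wealthS. Qed.

Lemma not_blown_up0 S : ~ blown_up 0 S.
Proof. by case=> l []. Qed.

Lemma not_blown_upS i S : ~ blown_up i S -> summable_at i S -> ~ blown_up i.+1 S.
Proof.
move=> nB g [l [hl [ng hd]]]; move: hl; rewrite ltnS leq_eqVlt => /orP[/eqP el|hl].
  by subst l.
by apply: nB; exists l.
Qed.

Lemma not_blown_upSE i S :
  ~ blown_up i.+1 S -> ~ blown_up i S /\ (summable_at i S \/ S i.+1 = S i).
Proof.
move=> nB1; split.
  by move=> [l [hl rest]]; apply: nB1; exists l; split => //; apply: ltnW.
case: (pselect (summable_at i S)) => g; first by left.
case: (pselect (S i.+1 = S i)) => d; first by right.
by exfalso; apply: nB1; exists i.
Qed.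

Lemma wealth_residualS i S : (i < pn p)%N ->
  wealth residual i.+1 S = wealth residual i S + residual_hold i S * (S i.+1 - S i).
Proof.
move=> hi; rewrite wealthS /hold ifT //.
by rewrite H_portfolio_of //; exact: residual_hold_nonanticipating.
Qed.

Lemma total_wealth_residual S i : U S -> (i <= pn p)%N -> ~ blown_up i S ->
  total_wealth i S = (wealth residual i S + wealth p i S)%:E.
Proof.
move=> US; elim: i => [_ _|i IH hi nB1].
  by rewrite total_wealth0 !wealth0 /= subrK.
have [nB [summ|flat]] := not_blown_upSE nB1; last first.
  rewrite total_wealthS wealth_residualS // wealthS flat subrr !mulr0 !addr0.
  by rewrite -IH ?(ltnW hi) //; apply: eq_eseriesr => m _; rewrite mulr0 addr0.
rewrite total_wealthS wealth_residualS // wealthS.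
rewrite (eseries_addMr _ (fun m => wealth_Q_ge0 m i US) (IH (ltnW hi) nB) summ).
rewrite /residual_hold; case: asboolP => [_|[]//].
by congr EFin; ring.
Qed.

Lemma wealth_residual_ge0 S i : U S -> (i <= pn p)%N -> 0 <= wealth residual i S.
Proof.
move=> US; elim: i => [|i IH] hi.
  have := total_wealth_ge 0 US.
  by rewrite (total_wealth_residual US hi (@not_blown_up0 S)) lee_fin; lra.
case: (pselect (~ blown_up i S /\ summable_at i S)) => [[nB summ]|off].
  have := total_wealth_ge i.+1 US.
  by rewrite (total_wealth_residual US hi (not_blown_upS nB summ)) lee_fin; lra.
rewrite wealth_residualS // /residual_hold; case: asboolP => // _.
by rewrite mul0r addr0 IH // ltnW.
Qed.

Lemma forced_sign_move_ge0 i S : U S -> 0 <= forced_sign i S * (S i.+1 - S i).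
Proof.
move=> US; rewrite /forced_sign; case: asboolP => up.
  by rewrite mul1r subr_ge0; apply: up.
case: asboolP => down; last by rewrite mul0r.
by rewrite mulN1r oppr_ge0 subr_le0; apply: down.
Qed.

Lemma twealth_bet k S :
  twealth (bet k) S = \sum_(0 <= i < pn p) k%:R * (forced_sign i S * (S i.+1 - S i)).
Proof.
rewrite /twealth /wealth minnn [pV _]/= add0r; apply: eq_bigr => i _.
by rewrite H_portfolio_of ?mulrA // => j S0 S1 /forced_sign_nonanticipating ->.
Qed.

Lemma twealth_bet_ge0 k S : U S -> 0 <= twealth (bet k) S.
Proof.
move=> US; rewrite twealth_bet; apply: sumr_ge0 => i _.
exact: mulr_ge0 (ler0n _ _) (forced_sign_move_ge0 i US).
Qed.

Lemma twealth_bet_ge k S l : U S -> (l < pn p)%N ->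
  k%:R * (forced_sign l S * (S l.+1 - S l)) <= twealth (bet k) S.
Proof.
move=> US hl; rewrite twealth_bet (bigD1_seq l) /= ?mem_index_iota ?iota_uniq //.
rewrite lerDl; apply: sumr_ge0 => i _.
exact: mulr_ge0 (ler0n _ _) (forced_sign_move_ge0 i US).
Qed.

Lemma blown_up_first i S : blown_up i S ->
  exists l, [/\ (l < i)%N, ~ blown_up l S, ~ summable_at l S & S l.+1 <> S l].
Proof.
elim: i => [/not_blown_up0 []|i IH hB].
case: (pselect (blown_up i S)) => hBi.
  by have [l [hl rest]] := IH hBi; exists l; split => //; apply: leqW.
case: hB => l [hl [ng hd]]; exists l; split => //.
move: hl; rewrite ltnS leq_eqVlt => /orP[/eqP -> //|hl].
by exfalso; apply: hBi; exists l.
Qed.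

(* The price can move down (along S1) and up (along S2) from the node, and
   every Q_m stays nonnegative either way: this bounds |H^m_l| by a fixed
   multiple of the wealth of Q_m at the node. *)
Lemma summable_at_unforced S l : U S -> ~ blown_up l S -> (l <= pn p)%N ->
  forced_sign l S = 0 -> summable_at l S.
Proof.
move=> US nB hl; rewrite /forced_sign; case: asboolP => up.
  by move/eqP; rewrite oner_eq0.
case: asboolP => down; first by move/eqP; rewrite oppr_eq0 oner_eq0.
move=> _.
move/existsNP: up => [S1 /not_implyP [US1 /not_implyP [ag1 /negP]]].
rewrite -ltNge => lt1.
move/existsNP: down => [S2 /not_implyP [US2 /not_implyP [ag2 /negP]]].
rewrite -ltNge => lt2.
set a := S1 l.+1 - S1 l; set b := S2 l.+1 - S2 l.
have a0 : a < 0 by rewrite /a subr_lt0.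
have b0 : 0 < b by rewrite /b subr_gt0.
have bound m : `|hold (Q m) l S| <= (b - a) / (b * - a) * wealth (Q m) l S.
  apply: normr_le_of_nonneg_moves => //; first exact: wealth_Q_ge0.
    have := wealth_Q_ge0 m l.+1 US1.
    by rewrite wealthS (wealth_agree _ ag1 (leqnn l)) (hold_agree _ ag1).
  have := wealth_Q_ge0 m l.+1 US2.
  by rewrite wealthS (wealth_agree _ ag2 (leqnn l)) (hold_agree _ ag2).
apply: (@le_lt_trans _ _ (((b - a) / (b * - a))%:E * total_wealth l S)%E).
  rewrite /total_wealth -nneseriesZl; last first.
    by move=> m _; rewrite lee_fin; apply: wealth_Q_ge0.
  by apply: lee_nneseries => m _; rewrite ?lee_fin // -EFinM lee_fin.
by rewrite (total_wealth_residual US hl nB) -EFinM ltry.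
Qed.

Lemma forced_gain_gt0 S l : U S -> (l < pn p)%N -> ~ blown_up l S ->
  ~ summable_at l S -> S l.+1 <> S l -> 0 < forced_sign l S * (S l.+1 - S l).
Proof.
move=> US hl nB ng hd; rewrite lt_def forced_sign_move_ge0 // andbT.
apply: mulf_neq0; last by rewrite subr_eq0; apply/eqP.
by apply/eqP => /(summable_at_unforced US nB (ltnW hl)).
Qed.

Lemma bet_unbounded S x : U S -> blown_up (pn p) S ->
  exists k, x <= twealth (bet k) S.
Proof.
move=> US hB; have [l [hl nB ng hd]] := blown_up_first hB.
have c0 := forced_gain_gt0 US hl nB ng hd.
exists (Num.truncn (x / (forced_sign l S * (S l.+1 - S l)))).+1.
apply: le_trans (twealth_bet_ge _ US hl); apply: ltW.
by rewrite -ltr_pdivrMr // truncnS_gt.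
Qed.

Lemma twealth_residual_ge S : U S -> ~ blown_up (pn p) S ->
  Num.max (- twealth p S) 0 <= twealth residual S.
Proof.
move=> US nB; have r0 := wealth_residual_ge0 US (leqnn (pn p)).
have := total_wealth_horizon US.
rewrite (total_wealth_residual US (leqnn _) nB) lee_fin ge_max => /andP[_ h].
by rewrite ge_max r0 andbT /twealth /=; lra.
Qed.

Lemma twealth_minus_hedge_ge0 m S : U S -> 0 <= twealth (minus_hedge m) S.
Proof.
move=> US; case: m => [|[|k]] /=.
- by rewrite twealth_const.
- exact: wealth_residual_ge0 US (leqnn _).
- exact: twealth_bet_ge0.
Qed.

Lemma minus_hedge_superhedges :
  superhedges U minus_hedge (fun S => (Num.max (- twealth p S) 0)%:E).
Proof.
move=> S US.
have hedge_ge0 m : (0 <= (twealth (minus_hedge m) S)%:E)%E.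
  by rewrite lee_fin twealth_minus_hedge_ge0.
case: (pselect (blown_up (pn p) S)) => hB.
  have [k hk] := bet_unbounded (Num.max (- twealth p S) 0) US hB.
  by apply: le_trans (nneseries_ge_term k.+2 hedge_ge0); rewrite lee_fin.
apply: le_trans (nneseries_ge_term 1 hedge_ge0); rewrite lee_fin.
exact: twealth_residual_ge.
Qed.

Lemma residual_endowment_ge0 S : U S -> 0 <= e - pV p.
Proof. by move=> US; have := wealth_residual_ge0 US (leq0n _); rewrite wealth0. Qed.

Lemma endowment_minus_hedge S : U S -> endowment minus_hedge = (e - pV p)%:E.
Proof.
move=> US; have e0 := residual_endowment_ge0 US.
rewrite /endowment (@eseries_recl_fin _ _ 0) //; last first.
  by move=> [|m] //=; rewrite lee_fin.
rewrite add0e (@eseries_recl_fin _ _ (e - pV p)) // eseries0 ?adde0 //.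
Qed.

Lemma pos_minus_hedge S : U S -> pos_gen_portfolio U minus_hedge.
Proof.
move=> US; split; last by move=> j S' _; rewrite wealth_const.
split=> [[|[|k]] //|[|[|k]] // _]; split => //=.
- exact: residual_endowment_ge0 US.
- by move=> S' US'; apply: (twealth_minus_hedge_ge0 1 US').
- by move=> S' US'; apply: (twealth_minus_hedge_ge0 k.+2 US').
Qed.

Lemma Ibar_neg_le S : U S ->
  (Ibar U (fun S => (Num.max (- twealth p S) 0)%:E) <= (e - pV p)%:E)%E.
Proof.
move=> US; rewrite -(endowment_minus_hedge US).
apply: ereal_inf_lbound; exists minus_hedge => //.
by split; [exact: pos_minus_hedge US | exact: minus_hedge_superhedges].
Qed.

End CondK.

Lemma condnL_condK (R : realType) (U : set (rseq R)) :
  condnL U -> (exists S, U S) -> condK U.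
Proof.
move=> nL [S US] p ps.
apply: le_ereal_inf_tmp => _ [Q [Qpos Qsup] <-].
have Q_ge0 : (0 <= endowment Q)%E.
  apply: nneseries_ge0 => -[|m] _ _; rewrite lee_fin.
    by rewrite -(wealth0 (Q 0%N) S) Qpos.2.
  by have [] := Qpos.1.2 m.+1 isT.
case E: (endowment Q) Q_ge0 => [e| |] // _; last by rewrite leey.
have := Ibar_neg_le nL ps Qpos Qsup E US.
by move=> /(leeD2l (pV p)%:E); rewrite -EFinD subrKC.
Qed.

Theorem theorem5p1 (R : realType) (s0 : R) (T : set (rseq R)) :
  (forall S, T S -> S 0%N = s0) ->
  condnL T -> condnK T.
Proof.
move=> _ nL S j TS.
have nLSj : condnL (shifted_cond T S j) := condnL_shifted_cond nL.
have neSj : exists S', shifted_cond T S j S' by exists (shift_seq S j), S.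
by split; [exact: condnL_LOP | exact: condnL_condK].
Qed.
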